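(* Let $(G,T)$ be a terminal graph that is the join of terminal graphs $(G_1,T)$ and $(G_2,T)$, and let $k$ be a positive integer. Let $(H_1,\ell_1)=\mathcal{C}^c_k(G_1,T)$ and $(H_2,\ell_2)=\mathcal{C}^c_k(G_2,T)$. Construct a labeled graph $(H,\ell)$ as follows: for every pair of nodes $x\in V(H_1)$, $y\in V(H_2)$ with $\ell_1(x)=\ell_2(y)$ introduce a node $(x,y)$ with $\ell((x,y))=\ell_1(x)$; add an edge between two distinct nodes $(x,y)$ and $(x',y')$ if and only if $xx'$ is an edge of $H_1$ and $yy'$ is an edge of $H_2$. Then $(H,\ell)=\mathcal{C}^c_k(G,T)$. Moreover, given certificates for $(H_1,\ell_1)$ and $(H_2,\ell_2)$, there is a certificate for $(H,\ell)$ such that for every $k$-coloring $\gamma$ of $G$, if $x$ is the $\gamma|_{V(G_1)}$-node of $H_1$ and $y$ is the $\gamma|_{V(G_2)}$-node of $H_2$, then $(x,y)$ is the $\gamma$-node of $H$.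
   Context: A terminal graph $(G,T)$ is a graph with $T\subseteq V(G)$. $(G,T)$ is the join of $(G_1,T)$ and $(G_2,T)$ if $G_1,G_2$ are induced subgraphs of $G$, $V(G_1)\cap V(G_2)=T$, $V(G_1)\cup V(G_2)=V(G)$, $V(G_1)\ne T$, $V(G_2)\ne T$, and every edge of $G$ lies in $G_1$ or $G_2$. A $k$-coloring of $G$ is a map $\alpha:V(G)\to\{1,\dots,k\}$ with $\alpha(u)\ne\alpha(w)$ for all edges $uw$. $\mathcal{C}_k(G)$ has the $k$-colorings as nodes, adjacent iff they differ on exactly one vertex. For $T\subseteq V(G)$, label each coloring $\gamma$ by $\gamma|_T$. A label component is a maximal set of colorings with the same label inducing a connected subgraph of $\mathcal{C}_k(G)$. The contracted solution graph $\mathcal{C}^c_k(G,T)=(H,\ell)$ has one node $x$ per label component $S_x$, distinct $x,y$ adjacent iff some $\gamma\in S_x,\gamma'\in S_y$ are adjacent in $\mathcal{C}_k(G)$, and $\ell(x)$ the common label on $S_x$; labeled graphs are identified up to label-preserving isomorphism. A certificate for $(H,\ell)$ is an assignment of nonempty sets $S_x$ of $k$-colorings of $G$ to the nodes such that: the $S_x$ partition the $k$-colorings; $\gamma|_T=\ell(x)$ for $\gamma\in S_x$; adjacent nodes have distinct labels; each $S_x$ induces a connected subgraph of $\mathcal{C}_k(G)$; distinct $x,y$ are adjacent iff some $\gamma\in S_x$ and $\gamma'\in S_y$ are adjacent in $\mathcal{C}_k(G)$. The $\gamma$-node with respect to a certificate $S$ is the node $x$ with $\gamma\in S_x$. *)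

From HB Require Import structures.
From mathcomp Require Import all_boot.
Set Implicit Arguments. Unset Strict Implicit. Unset Printing Implicit Defensive.

(* A finite simple graph is (V : finType, e : rel V) with e symmetric and
   irreflexive.  Induced subgraphs are given by vertex sets A : {set V}.
   A k-coloring of G[A] is encoded as a partial map V -> option 'I_k that is
   defined exactly on A and proper on the edges of G[A]. *)
Notation pcol V k := {ffun V -> option 'I_k}.

Section Defs.
Variables (V : finType) (e : rel V) (k : nat).

Definition is_coloring (A : {set V}) (f : pcol V k) : bool :=
  [forall v, (f v == None) == (v \notin A)] &&
  [forall u, forall w, [&& u \in A, w \in A & e u w] ==> (f u != f w)].

Definition col_adj (f g : pcol V k) : bool := #|[set v | f v != g v]| == 1.

Definition restr (B : {set V}) (f : pcol V k) : pcol V k :=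
  [ffun v => if v \in B then f v else None].

Definition connected_in (S : {set pcol V k}) : bool :=
  [forall f in S, forall g in S,
     connect (fun a b => [&& a \in S, b \in S & col_adj a b]) f g].

Definition label_comp_cand (T A : {set V}) (S : {set pcol V k}) : bool :=
  [&& S != set0, [forall f in S, is_coloring A f],
      [forall f in S, forall g in S, restr T f == restr T g]
    & connected_in S].

Definition label_comp (T A : {set V}) (S : {set pcol V k}) : bool :=
  maxset (label_comp_cand T A) S.

Definition comp_edge (S1 S2 : {set pcol V k}) : bool :=
  (S1 != S2) && [exists f in S1, exists g in S2, col_adj f g].

(* The labeled graph (N, E, l) is (up to label-preserving isomorphism)
   the contracted solution graph C^c_k(G[A], T). *)
Definition is_contraction (N : finType) (E : rel N) (l : N -> pcol V k)
    (T A : {set V}) : Prop :=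
  exists phi : N -> {set pcol V k},
    [/\ injective phi,
        (forall x, label_comp T A (phi x)),
        (forall S, label_comp T A S -> exists x, phi x = S),
        (forall x y, E x y = comp_edge (phi x) (phi y)) &
        (forall x f, f \in phi x -> restr T f = l x)].

Definition certificate (N : finType) (E : rel N) (l : N -> pcol V k)
    (T A : {set V}) (S : N -> {set pcol V k}) : Prop :=
  (forall x, S x != set0) /\
  (forall x f, f \in S x -> is_coloring A f) /\
  (forall f, is_coloring A f -> exists x, f \in S x) /\
  (forall x y f, f \in S x -> f \in S y -> x = y) /\
  (forall x f, f \in S x -> restr T f = l x) /\
  (forall x y, E x y -> l x != l y) /\
  (forall x, connected_in (S x)) /\
  (forall x y, x != y ->
     (E x y <-> exists f g, [/\ f \in S x, g \in S y & col_adj f g])).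

End Defs.

Definition is_join (V : finType) (e : rel V) (T A1 A2 : {set V}) : Prop :=
  [/\ A1 :&: A2 = T, A1 :|: A2 = setT, A1 != T, A2 != T &
      forall u v, e u v ->
        ((u \in A1) && (v \in A1)) || ((u \in A2) && (v \in A2))].

Definition lab_match (N1 N2 : finType) (L : Type) (l1 : N1 -> L) (l2 : N2 -> L)
  (eqL : L -> L -> bool) : pred (N1 * N2) := fun p => eqL (l1 p.1) (l2 p.2).

Definition prod_edge (N1 N2 : finType) (E1 : rel N1) (E2 : rel N2)
    (P : pred (N1 * N2)) : rel {p : N1 * N2 | P p} :=
  fun p q => [&& p != q, E1 (val p).1 (val q).1 & E2 (val p).2 (val q).2].

Definition prod_lab (N1 N2 : finType) (L : Type) (P : pred (N1 * N2))
  (l1 : N1 -> L) : {p : N1 * N2 | P p} -> L := fun p => l1 (val p).1.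

Arguments prod_edge {N1 N2} E1 E2 P _ _.
Arguments prod_lab {N1 N2 L} P l1 _.

From HB Require Import structures.
From mathcomp Require Import all_boot.
Set Implicit Arguments. Unset Strict Implicit. Unset Printing Implicit Defensive.

(* Since V(G1) and V(G2) cover V(G) and every edge of G lies in G1 or G2, a
   coloring of G is the same as a pair of colorings of G1 and G2 that agree on
   T, and two colorings of G disagree exactly where one of the two pairs of
   restrictions does.  Given certificates S1, S2 for G1, G2, put in the part
   (x, y) all colorings of G whose restrictions lie in S1 x and S2 y.  Such a
   part is connected: move from f to g first on the G1 side, then on the G2
   side.  An adjacency of G between different parts changes a single vertex;
   it lies in T iff the label changes, so it projects to adjacencies of G1 and
   of G2 exactly when the label changes.  This yields a certificate for the
   product, and a certificate always determines the contracted solution graph,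
   because its parts are maximal label components. *)

Section SolutionGraph.
Variables (V : finType) (e : rel V) (k : nat).
Implicit Types (f g h : pcol V k) (S P Q : {set pcol V k}) (A B T : {set V}).

Definition disagree f g : {set V} := [set v | f v != g v].

Lemma col_adjE f g : col_adj f g = (#|disagree f g| == 1).
Proof. by []. Qed.

Lemma disagreeC f g : disagree f g = disagree g f.
Proof. by apply/setP=> v; rewrite !inE eq_sym. Qed.

Lemma col_adjC f g : col_adj f g = col_adj g f.
Proof. by rewrite !col_adjE disagreeC. Qed.

Lemma disagreexx f : disagree f f = set0.
Proof. by apply/setP=> v; rewrite !inE eqxx. Qed.

Lemma disagree_eq0 f g : (disagree f g == set0) = (f == g).
Proof.
apply/eqP/eqP=> [fg0|->]; last exact: disagreexx.
by apply/ffunP=> v; have := in_set0 v; rewrite -fg0 inE => /negbFE/eqP.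
Qed.

Lemma disagree_restr B f g : disagree (restr B f) (restr B g) = B :&: disagree f g.
Proof. by apply/setP=> v; rewrite !inE /restr !ffunE; case: (v \in B). Qed.

Lemma restr_restr T A f : T \subset A -> restr T (restr A f) = restr T f.
Proof.
move=> sTA; apply/ffunP=> v; rewrite /restr !ffunE.
by case vT: (v \in T); rewrite // (subsetP sTA _ vT).
Qed.

Lemma col_adj_restr B f g :
  col_adj f g -> restr B f = restr B g \/ col_adj (restr B f) (restr B g).
Proof.
rewrite !col_adjE disagree_restr => /eqP fg1.
have : #|B :&: disagree f g| <= 1 by rewrite -fg1 subset_leq_card ?subsetIr.
rewrite leq_eqVlt ltnS leqn0 => /orP[-> | /eqP/cards0_eq BD0]; first by right.
by left; apply/eqP; rewrite -disagree_eq0 disagree_restr BD0.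
Qed.

Lemma is_coloringP A f :
  reflect ((forall v, (f v == None) = (v \notin A)) /\
           (forall u w, u \in A -> w \in A -> e u w -> f u != f w))
          (is_coloring e A f).
Proof.
apply: (iffP andP) => [[/forallP domf /forallP properf] | [domf properf]]; split.
- by move=> v; have /eqP := domf v.
- by move=> u w uA wA uw; have /forallP/(_ w) := properf u; rewrite uA wA uw.
- by apply/forallP=> v; rewrite domf.
- by apply/forallP=> u; apply/forallP=> w; apply/implyP=> /and3P[]; apply: properf.
Qed.

Lemma coloring_out A f v : is_coloring e A f -> v \notin A -> f v = None.
Proof. by case/is_coloringP=> domf _ vA; apply/eqP; rewrite domf. Qed.

Lemma restr_coloring A f : is_coloring e setT f -> is_coloring e A (restr A f).
Proof.
case/is_coloringP=> domf properf; apply/is_coloringP; split=> [v | u w uA wA uw].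
  by rewrite /restr ffunE; case: (v \in A); rewrite //= domf inE.
by rewrite /restr !ffunE uA wA properf ?inE.
Qed.

Definition adj_in S : rel (pcol V k) :=
  fun f g => [&& f \in S, g \in S & col_adj f g].

Lemma adj_in_sym S : symmetric (adj_in S).
Proof. by move=> f g; rewrite /adj_in col_adjC andbCA. Qed.

Lemma connect_adj_in_sub S P f g :
  S \subset P -> connect (adj_in S) f g -> connect (adj_in P) f g.
Proof.
move=> sSP; apply: connect_sub => a b /and3P[aS bS ab]; apply: connect1.
by rewrite /adj_in !(subsetP sSP) ?ab.
Qed.

Lemma connected_inP S :
  reflect (forall f g, f \in S -> g \in S -> connect (adj_in S) f g) (connected_in S).
Proof.
apply: (iffP forall_inP) => [conn f g fS gS | conn f fS].
  by have /forall_inP := conn f fS; apply.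
by apply/forall_inP=> g; apply: conn.
Qed.

Lemma connect_homo (X Y : finType) (r : rel X) (r' : rel Y) (F : X -> Y) :
  {homo F : a b / r a b >-> r' a b} -> {homo F : a b / connect r a b >-> connect r' a b}.
Proof.
move=> homoF a b /connectP[s pth ->] {b}.
elim: s a pth => [|c s IHs] a //= /andP[rac pth].
exact: connect_trans (connect1 (homoF _ _ rac)) (IHs _ pth).
Qed.

Lemma label_comp_candP T A S :
  reflect [/\ S != set0, (forall f, f \in S -> is_coloring e A f),
              (forall f g, f \in S -> g \in S -> restr T f = restr T g) &
              connected_in S]
          (label_comp_cand e T A S).
Proof.
apply: (iffP and4P) => [[S0 /forall_inP Scol /forall_inP Slab Sconn] | [S0 Scol Slab Sconn]].
  by split=> // f g fS gS; apply/eqP; have /forall_inP := Slab f fS; apply.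
split=> //; first exact/forall_inP.
by apply/forall_inP=> f fS; apply/forall_inP=> g gS; rewrite (Slab f g).
Qed.

Lemma label_comp_cand1 T A f : is_coloring e A f -> label_comp_cand e T A [set f].
Proof.
move=> fcol; apply/label_comp_candP; split.
- by apply/set0Pn; exists f; rewrite set11.
- by move=> g /set1P->.
- by move=> g h /set1P-> /set1P->.
- by apply/connected_inP=> g h /set1P-> /set1P->.
Qed.

Lemma label_comp_cand_setU T A P Q f g :
  label_comp_cand e T A P -> label_comp_cand e T A Q -> f \in P -> g \in Q ->
  restr T f = restr T g -> f = g \/ col_adj f g -> label_comp_cand e T A (P :|: Q).
Proof.
move=> /label_comp_candP[P0 Pcol Plab /connected_inP Pconn].
move=> /label_comp_candP[_ Qcol Qlab /connected_inP Qconn] fP gQ fgT fg.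
have lab h : h \in P :|: Q -> restr T h = restr T f.
  by case/setUP=> [hP | hQ]; [apply: Plab | rewrite fgT; apply: Qlab].
have connf h : h \in P :|: Q -> connect (adj_in (P :|: Q)) f h.
  case/setUP=> [hP | hQ]; first exact: connect_adj_in_sub (subsetUl P Q) (Pconn f h fP hP).
  apply: connect_trans (connect_adj_in_sub (subsetUr P Q) (Qconn g h gQ hQ)).
  case: fg => [-> // | fg]; apply: connect1.
  by rewrite /adj_in fg !inE fP gQ orbT.
apply/label_comp_candP; split.
- by have /set0Pn[h hP] := P0; apply/set0Pn; exists h; rewrite inE hP.
- by move=> h /setUP[/Pcol | /Qcol].
- by move=> h h' /lab-> /lab->.
- apply/connected_inP=> h h' hPQ h'PQ; apply: connect_trans (connf h' h'PQ).
  by rewrite (sym_connect_sym (@adj_in_sym _)) connf.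
Qed.

Lemma label_comp_eq T A P Q f g :
  label_comp e T A P -> label_comp e T A Q -> f \in P -> g \in Q ->
  restr T f = restr T g -> f = g \/ col_adj f g -> P = Q.
Proof.
move=> /maxsetP[Pcand Pmax] /maxsetP[Qcand Qmax] fP gQ fgT fg.
have PQcand := label_comp_cand_setU Pcand Qcand fP gQ fgT fg.
by rewrite -(Pmax _ PQcand (subsetUl P Q)) -{2}(Qmax _ PQcand (subsetUr P Q)).
Qed.

Section Certificate.
Variables (N : finType) (E : rel N) (l : N -> pcol V k) (T A : {set V}).
Variable S : N -> {set pcol V k}.
Hypothesis cS : certificate e E l T A S.

Lemma cert_neq0 x : S x != set0.
Proof. by case: cS => S0 _; apply: S0. Qed.

Lemma cert_coloring x f : f \in S x -> is_coloring e A f.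
Proof. by case: cS => _ [Scol _]; apply: Scol. Qed.

Lemma cert_cover f : is_coloring e A f -> exists x, f \in S x.
Proof. by case: cS => _ [_ [Scover _]]; apply: Scover. Qed.

Lemma cert_node_uniq x y f : f \in S x -> f \in S y -> x = y.
Proof. by case: cS => _ [_ [_ [Suniq _]]]; apply: Suniq. Qed.

Lemma cert_label x f : f \in S x -> restr T f = l x.
Proof. by case: cS => _ [_ [_ [_ [Slab _]]]]; apply: Slab. Qed.

Lemma cert_edge_label x y : E x y -> l x != l y.
Proof. by case: cS => _ [_ [_ [_ [_ [Elab _]]]]]; apply: Elab. Qed.

Lemma cert_connected x : connected_in (S x).
Proof. by case: cS => _ [_ [_ [_ [_ [_ [Sconn _]]]]]]; apply: Sconn. Qed.

Lemma cert_edgeP x y :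
  x != y -> E x y <-> exists f g, [/\ f \in S x, g \in S y & col_adj f g].
Proof. by case: cS => _ [_ [_ [_ [_ [_ [_ Eadj]]]]]]; apply: Eadj. Qed.

Lemma cert_same_node x y f g : f \in S x -> g \in S y ->
  restr T f = restr T g -> f = g \/ col_adj f g -> x = y.
Proof.
move=> fx gy fgT [fg | fg]; first by apply: (cert_node_uniq fx); rewrite fg.
have [// | nxy] := eqVneq x y.
have /cert_edge_label : E x y by apply/(cert_edgeP nxy); exists f, g.
by rewrite -(cert_label fx) -(cert_label gy) fgT eqxx.
Qed.

Lemma cert_edge x y f g : f \in S x -> g \in S y ->
  col_adj f g -> restr T f != restr T g -> E x y.
Proof.
move=> fx gy fg; rewrite (cert_label fx) (cert_label gy) => lxy.
have nxy : x != y by apply: contraNneq lxy => ->.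
by apply/(cert_edgeP nxy); exists f, g.
Qed.

Lemma cert_adj_disagree x y f g : f \in S x -> g \in S y ->
  col_adj f g -> l x != l y -> disagree f g = disagree (l x) (l y).
Proof.
move=> fx gy; rewrite col_adjE -(cert_label fx) -(cert_label gy) -disagree_eq0.
rewrite disagree_restr => /cards1P[v ->] /set0Pn[u /setIP[uT]].
by rewrite inE => /eqP uv; apply/esym/setIidPr; rewrite sub1set -uv.
Qed.

Section Restriction.
Hypothesis sTA : T \subset A.

Lemma cert_same_node_restr x y f g : restr A f \in S x -> restr A g \in S y ->
  col_adj f g -> restr T f = restr T g -> x = y.
Proof.
move=> fx gy fg fgT; apply: cert_same_node fx gy _ (col_adj_restr A fg).
by rewrite !restr_restr.
Qed.

Lemma cert_edge_restr x y f g : restr A f \in S x -> restr A g \in S y ->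
  col_adj f g -> restr T f != restr T g -> E x y.
Proof.
move=> fx gy fg; rewrite -(restr_restr f sTA) -(restr_restr g sTA) => fgT.
apply: (cert_edge fx gy _ fgT); case: (col_adj_restr A fg) => // fgA.
by rewrite fgA eqxx in fgT.
Qed.

End Restriction.

Lemma cert_label_comp x : label_comp e T A (S x).
Proof.
have Scand : label_comp_cand e T A (S x).
  apply/label_comp_candP; split; [exact: cert_neq0 | exact: cert_coloring | |].
    by move=> f g fx gx; rewrite (cert_label fx) (cert_label gx).
  exact: cert_connected.
apply/maxsetP; split=> // P /label_comp_candP[_ Pcol Plab /connected_inP Pconn] sSP.
apply/eqP; rewrite eqEsubset sSP andbT; apply/subsetP=> g gP.
have [f fx] := set0Pn _ (cert_neq0 x).
(* The label is constant on P, so an adjacency inside P never leaves the part. *)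
have stay a b : adj_in P a b -> a \in S x -> b \in S x.
  move=> /and3P[aP bP ab] ax; have [y by'] := cert_cover (Pcol b bP).
  by rewrite (cert_same_node ax by' (Plab a b aP bP) (or_intror ab)).
have closedSx : closed (adj_in P) (S x).
  by move=> a b ab; apply/idP/idP; apply: stay; rewrite // adj_in_sym.
by rewrite -(closed_connect closedSx (Pconn f g (subsetP sSP f fx) gP)).
Qed.

Lemma certificate_is_contraction : is_contraction e E l T A.
Proof.
have S_inj : injective S.
  move=> x y Sxy; have [f fx] := set0Pn _ (cert_neq0 x).
  by apply: (cert_node_uniq fx); rewrite -Sxy.
exists S; split=> //; first exact: cert_label_comp.
- move=> P Pcomp; have /maxsetP[/label_comp_candP[/set0Pn[f fP] Pcol _ _] _] := Pcomp.
  have [x fx] := cert_cover (Pcol f fP).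
  by exists x; apply: (label_comp_eq (cert_label_comp x) Pcomp fx fP _ (or_introl _)).
- move=> x y; rewrite /comp_edge (inj_eq S_inj).
  have [<- | nxy] /= := eqVneq x y.
    by apply/negbTE/negP=> /cert_edge_label; rewrite eqxx.
  apply/idP/exists_inP=> [/(cert_edgeP nxy)[f [g [fx gy fg]]] | [f fx /exists_inP[g gy fg]]].
    by exists f => //; apply/exists_inP; exists g.
  by apply/(cert_edgeP nxy); exists f, g.
- by move=> x f; apply: cert_label.
Qed.

End Certificate.

Lemma contraction_certificate (N : finType) (E : rel N) (l : N -> pcol V k) T A :
  is_contraction e E l T A -> exists part, certificate e E l T A part.
Proof.
move=> [phi [phi_inj comp surj Ephi lab]]; exists phi.
have cand x := (maxsetP (comp x)).1.
split; last split; last split; last split; last split; last split; last split.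
- by move=> x; case/label_comp_candP: (cand x).
- by move=> x; case/label_comp_candP: (cand x).
- move=> f fcol; have [P Pcomp sfP] := maxset_exists (label_comp_cand1 T fcol).
  have [x phix] := surj P Pcomp.
  by exists x; rewrite phix (subsetP sfP) ?set11.
- move=> x y f fx fy; apply: phi_inj.
  exact: (label_comp_eq (comp x) (comp y) fx fy _ (or_introl _)).
- exact: lab.
- move=> x y; rewrite Ephi => /andP[nxy /exists_inP[f fx /exists_inP[g gy fg]]].
  apply: contraNneq nxy => lxy; apply/eqP.
  apply: (label_comp_eq (comp x) (comp y) fx gy _ (or_intror fg)).
  by rewrite (lab _ _ fx) (lab _ _ gy) lxy.
- by move=> x; case/label_comp_candP: (cand x).
- move=> x y nxy; rewrite Ephi /comp_edge (inj_eq phi_inj) nxy /=.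
  split=> [/exists_inP[f fx /exists_inP[g gy fg]] | [f [g [fx gy fg]]]].
    by exists f, g.
  by apply/exists_inP; exists f => //; apply/exists_inP; exists g.
Qed.

End SolutionGraph.

Section Join.
Variables (V : finType) (e : rel V) (k : nat) (T A1 A2 : {set V}).
Hypotheses (joinI : A1 :&: A2 = T) (joinU : A1 :|: A2 = setT).
Hypothesis join_edge :
  forall u v, e u v -> ((u \in A1) && (v \in A1)) || ((u \in A2) && (v \in A2)).
Implicit Types (f g h : pcol V k).

Lemma sub_T_A1 : T \subset A1. Proof. by rewrite -joinI subsetIl. Qed.
Lemma sub_T_A2 : T \subset A2. Proof. by rewrite -joinI subsetIr. Qed.

Lemma in_join v : (v \in A1) || (v \in A2).
Proof. by rewrite -in_setU joinU inE. Qed.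

Definition glue h1 h2 : pcol V k := [ffun v => if v \in A1 then h1 v else h2 v].

Lemma glue_restr f : glue (restr A1 f) (restr A2 f) = f.
Proof.
apply/ffunP=> v; rewrite /glue /restr !ffunE.
by case vA1: (v \in A1); last by have := in_join v; rewrite vA1 => /= ->.
Qed.

Lemma disagree_join f g :
  disagree f g = disagree (restr A1 f) (restr A1 g) :|: disagree (restr A2 f) (restr A2 g).
Proof. by rewrite !disagree_restr -setIUl joinU setTI. Qed.

Lemma join_coloring f :
  is_coloring e A1 (restr A1 f) -> is_coloring e A2 (restr A2 f) -> is_coloring e setT f.
Proof.
move=> /is_coloringP[dom1 proper1] /is_coloringP[dom2 proper2].
apply/is_coloringP; split=> [v | u w _ _ uw]; rewrite ?inE.
  by case/orP: (in_join v) => vA; [have := dom1 v | have := dom2 v]; rewrite /restr ffunE vA.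
case/orP: (join_edge uw) => /andP[uA wA];
  [have := proper1 u w uA wA uw | have := proper2 u w uA wA uw]; by rewrite /restr !ffunE uA wA.
Qed.

Section Glue.
Variables h1 h2 : pcol V k.
Hypotheses (h1col : is_coloring e A1 h1) (h2col : is_coloring e A2 h2).
Hypothesis h12 : restr T h1 = restr T h2.

Lemma restr1_glue : restr A1 (glue h1 h2) = h1.
Proof.
apply/ffunP=> v; rewrite /restr /glue !ffunE.
by case vA1: (v \in A1); rewrite // (coloring_out h1col) ?vA1.
Qed.

Lemma restr2_glue : restr A2 (glue h1 h2) = h2.
Proof.
apply/ffunP=> v; rewrite /restr /glue !ffunE.
case vA2: (v \in A2); last by rewrite (coloring_out h2col) ?vA2.
case vA1: (v \in A1) => //.
have vT : v \in T by rewrite -joinI inE vA1 vA2.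
by have /ffunP/(_ v) := h12; rewrite !ffunE vT.
Qed.

End Glue.

Section JoinCertificate.
Variables (N1 N2 : finType) (E1 : rel N1) (E2 : rel N2).
Variables (l1 : N1 -> pcol V k) (l2 : N2 -> pcol V k).
Variables (S1 : N1 -> {set pcol V k}) (S2 : N2 -> {set pcol V k}).
Hypotheses (cert1 : certificate e E1 l1 T A1 S1) (cert2 : certificate e E2 l2 T A2 S2).

Definition join_part (x : N1) (y : N2) : {set pcol V k} :=
  [set f | (restr A1 f \in S1 x) && (restr A2 f \in S2 y)].

Lemma label_restr1 x f : restr A1 f \in S1 x -> restr T f = l1 x.
Proof. by move=> fx; rewrite -(cert_label cert1 fx) restr_restr ?sub_T_A1. Qed.

Lemma label_restr2 y f : restr A2 f \in S2 y -> restr T f = l2 y.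
Proof. by move=> fy; rewrite -(cert_label cert2 fy) restr_restr ?sub_T_A2. Qed.

Lemma join_part_coloring x y f : f \in join_part x y -> is_coloring e setT f.
Proof.
rewrite inE => /andP[fx fy].
by apply: join_coloring; [exact: (cert_coloring cert1 fx) | exact: (cert_coloring cert2 fy)].
Qed.

Section Matching.
Variables (x : N1) (y : N2).
Hypothesis lxy : l1 x = l2 y.

Lemma restr_glue h1 h2 : h1 \in S1 x -> h2 \in S2 y ->
  restr A1 (glue h1 h2) = h1 /\ restr A2 (glue h1 h2) = h2.
Proof.
move=> h1x h2y; have h1col := cert_coloring cert1 h1x; have h2col := cert_coloring cert2 h2y.
have h12 : restr T h1 = restr T h2 by rewrite (cert_label cert1 h1x) (cert_label cert2 h2y).
by rewrite restr1_glue ?restr2_glue.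
Qed.

Lemma glue_join_part h1 h2 : h1 \in S1 x -> h2 \in S2 y -> glue h1 h2 \in join_part x y.
Proof.
by move=> h1x h2y; have [h1E h2E] := restr_glue h1x h2y; rewrite inE h1E h2E h1x h2y.
Qed.

Lemma join_part_neq0 : join_part x y != set0.
Proof.
have [h1 h1x] := set0Pn _ (cert_neq0 cert1 x); have [h2 h2y] := set0Pn _ (cert_neq0 cert2 y).
by apply/set0Pn; exists (glue h1 h2); apply: glue_join_part.
Qed.

End Matching.

Lemma disagree_glue x y x' y' h1 h2 g1 g2 : l1 x = l2 y -> l1 x' = l2 y' ->
  h1 \in S1 x -> h2 \in S2 y -> g1 \in S1 x' -> g2 \in S2 y' ->
  disagree (glue h1 h2) (glue g1 g2) = disagree h1 g1 :|: disagree h2 g2.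
Proof.
move=> lxy lxy' h1x h2y g1x g2y.
have [h1E h2E] := restr_glue lxy h1x h2y; have [g1E g2E] := restr_glue lxy' g1x g2y.
by rewrite disagree_join h1E h2E g1E g2E.
Qed.

Lemma join_part_connected x y : l1 x = l2 y -> connected_in (join_part x y).
Proof.
move=> lxy; apply/connected_inP=> f g; rewrite !inE => /andP[f1 f2] /andP[g1 g2].
have conn1 := connected_inP _ (cert_connected cert1 x) _ _ f1 g1.
have conn2 := connected_inP _ (cert_connected cert2 y) _ _ f2 g2.
have lift1 : {homo glue^~ (restr A2 f) :
    h h' / adj_in (S1 x) h h' >-> adj_in (join_part x y) h h'}.
  move=> h h' /and3P[hx h'x hh']; rewrite /adj_in !(glue_join_part lxy) //.
  by rewrite col_adjE (disagree_glue lxy lxy hx f2 h'x f2) disagreexx setU0.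
have lift2 : {homo glue (restr A1 g) :
    h h' / adj_in (S2 y) h h' >-> adj_in (join_part x y) h h'}.
  move=> h h' /and3P[hy h'y hh']; rewrite /adj_in !(glue_join_part lxy) //.
  by rewrite col_adjE (disagree_glue lxy lxy g1 hy g1 h'y) disagreexx set0U.
rewrite -[f]glue_restr -[g]glue_restr.
exact: connect_trans (connect_homo lift1 conn1) (connect_homo lift2 conn2).
Qed.

Lemma join_part_adj x y x' y' : E1 x x' -> E2 y y' -> l1 x = l2 y -> l1 x' = l2 y' ->
  exists f g, [/\ f \in join_part x y, g \in join_part x' y' & col_adj f g].
Proof.
move=> Exx' Eyy' lxy lxy'.
have lx := cert_edge_label cert1 Exx'.
have nxx' : x != x' by apply: contraNneq lx => ->.
have nyy' : y != y' by apply: contraNneq (cert_edge_label cert2 Eyy') => ->.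
have [f1 [g1 [f1x g1x fg1]]] := (cert_edgeP cert1 nxx').1 Exx'.
have [f2 [g2 [f2y g2y fg2]]] := (cert_edgeP cert2 nyy').1 Eyy'.
have d1 := cert_adj_disagree cert1 f1x g1x fg1 lx.
have d2 := cert_adj_disagree cert2 f2y g2y fg2 (cert_edge_label cert2 Eyy').
exists (glue f1 f2), (glue g1 g2).
split; [exact: (glue_join_part lxy f1x f2y) | exact: (glue_join_part lxy' g1x g2y) |].
by rewrite col_adjE (disagree_glue lxy lxy' f1x f2y g1x g2y) d2 -lxy -lxy' -d1 setUid -col_adjE.
Qed.

Lemma join_part_adj_edge x y x' y' f g : f \in join_part x y -> g \in join_part x' y' ->
  col_adj f g -> (x, y) != (x', y') -> E1 x x' && E2 y y'.
Proof.
rewrite !inE => /andP[f1 f2] /andP[g1 g2] fg nxy.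
have [fgT | fgT] := eqVneq (restr T f) (restr T g).
  by rewrite (cert_same_node_restr cert1 sub_T_A1 f1 g1 fg fgT)
             (cert_same_node_restr cert2 sub_T_A2 f2 g2 fg fgT) eqxx in nxy.
by rewrite (cert_edge_restr cert1 sub_T_A1 f1 g1 fg fgT)
           (cert_edge_restr cert2 sub_T_A2 f2 g2 fg fgT).
Qed.

Lemma join_certificate :
  certificate e (prod_edge E1 E2 (lab_match l1 l2 eq_op))
    (prod_lab (lab_match l1 l2 eq_op) l1) T setT (fun p => join_part (val p).1 (val p).2).
Proof.
have lab (p : {p | lab_match l1 l2 eq_op p}) : l1 (val p).1 = l2 (val p).2 := eqP (valP p).
split; last split; last split; last split; last split; last split; last split.
- by move=> p; apply/join_part_neq0/lab.
- by move=> p f; apply: join_part_coloring.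
- move=> f fcol.
  have [x fx] := cert_cover cert1 (restr_coloring A1 fcol).
  have [y fy] := cert_cover cert2 (restr_coloring A2 fcol).
  have lxy : lab_match l1 l2 eq_op (x, y).
    by rewrite /lab_match /= -(label_restr1 fx) -(label_restr2 fy).
  by exists (exist _ (x, y) lxy); rewrite inE fx fy.
- move=> p q f; rewrite !inE => /andP[fp1 fp2] /andP[fq1 fq2]; apply: val_inj.
  rewrite [val p]surjective_pairing [val q]surjective_pairing.
  by rewrite (cert_node_uniq cert1 fp1 fq1) (cert_node_uniq cert2 fp2 fq2).
- by move=> p f; rewrite inE => /andP[/label_restr1].
- by move=> p q /and3P[_ /(cert_edge_label cert1)].
- by move=> p; apply/join_part_connected/lab.
- move=> p q npq; split=> [/and3P[_ E1pq E2pq] | [f [g [fp gq fg]]]].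
    exact: join_part_adj E1pq E2pq (lab p) (lab q).
  rewrite /prod_edge npq; apply: (join_part_adj_edge fp gq fg).
  by rewrite -!surjective_pairing (inj_eq val_inj).
Qed.

End JoinCertificate.

End Join.

Theorem lemma4 (V : finType) (e : rel V) (T A1 A2 : {set V}) (k : nat)
    (N1 N2 : finType) (E1 : rel N1) (E2 : rel N2)
    (l1 : N1 -> pcol V k) (l2 : N2 -> pcol V k) :
  symmetric e -> irreflexive e -> is_join e T A1 A2 -> 0 < k ->
  is_contraction e E1 l1 T A1 -> is_contraction e E2 l2 T A2 ->
  is_contraction e
    (prod_edge E1 E2 (lab_match l1 l2 eq_op))
    (prod_lab (lab_match l1 l2 eq_op) l1) T setT /\
  (forall S1 S2,
     certificate e E1 l1 T A1 S1 -> certificate e E2 l2 T A2 S2 ->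
     exists S : {p : N1 * N2 | lab_match l1 l2 eq_op p} -> {set pcol V k},
       certificate e (prod_edge E1 E2 (lab_match l1 l2 eq_op))
         (prod_lab (lab_match l1 l2 eq_op) l1) T setT S /\
       (forall (f : pcol V k) (p : {p : N1 * N2 | lab_match l1 l2 eq_op p}),
          is_coloring e setT f ->
          restr A1 f \in S1 (val p).1 -> restr A2 f \in S2 (val p).2 ->
          f \in S p)).
Proof.
move=> _ _ [joinI joinU _ _ join_edge] _.
move=> /contraction_certificate[C1 cert1] /contraction_certificate[C2 cert2].
split.
  apply: certificate_is_contraction.
  exact: (join_certificate joinI joinU join_edge cert1 cert2).
move=> S1 S2 {}cert1 {}cert2; exists (fun p => join_part A1 A2 S1 S2 (val p).1 (val p).2).
split; first exact: (join_certificate joinI joinU join_edge cert1 cert2).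
by move=> f p _ f1 f2; rewrite inE f1 f2.
Qed.
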